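(* Let $-\infty\le\alpha<\beta\le+\infty$ and let $a,b,d,e$ be differentiable real functions on $(\alpha,\beta)$ with $d(x)>0$ and $e(x)>0$ there. Let $h$ be a real function, differentiable on $(\alpha,\beta)$, satisfying the Riccati equation $$h'(x)=d(x)-(b(x)-a(x))h(x)-e(x)h(x)^2,\qquad x\in(\alpha,\beta).$$ If $h(\alpha^+)>0$, then $h(x)>0$ for all $x\in(\alpha,\beta)$.
   Context: $h(\alpha^+)$ denotes the one-sided limit $\lim_{x\to\alpha^+}h(x)$. *)

From HB Require Import structures.
From mathcomp Require Import all_boot all_order all_algebra.
From mathcomp Require Import all_classical all_reals all_analysis.
Set Implicit Arguments. Unset Strict Implicit. Unset Printing Implicit Defensive.
Import Order.TTheory GRing.Theory Num.Theory.
Import numFieldNormedType.Exports.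
Local Open Scope ring_scope.
Local Open Scope classical_set_scope.
Local Open Scope ereal_scope.

Definition in_open_ext {R : realType} (al be : \bar R) (x : R) : Prop :=
  al < x%:E < be.

Definition right_lim {R : realType} (h : R -> R) (al : \bar R) (l : \bar R)
  : Prop :=
  match al with
  | EFin a => (h x)%:E @[x --> a^'+] --> l
  | -oo => (h x)%:E @[x --> -oo%R] --> l
  | +oo => False
  end.

From HB Require Import structures.
From mathcomp Require Import all_boot all_order all_algebra.
From mathcomp Require Import all_classical all_reals all_analysis.
From mathcomp Require Import lra.
Import Order.TTheory GRing.Theory Num.Theory.
Import numFieldNormedType.Exports.
Local Open Scope ring_scope.

(* At a zero of h the Riccati equation reduces to h' = d > 0, so h can only
   cross zero upwards.  Since h > 0 somewhere near alpha, a first zero z of h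
   to the right of such a point has h > 0 just to its left, which forces
   h'(z) <= 0: a contradiction. *)

Lemma derive1_le0_at_left_min {R : realType} {f : R -> R} {y c : R} :
  y < c -> derivable f c 1 -> (forall t, y < t < c -> f c <= f t) ->
  derive1 f c <= 0.
Proof.
move=> yc fc cmin; rewrite derive1E ['D_1 f c]cvg_at_leftE //.
apply: limr_le.
  rewrite -(cvg_at_leftE (fun h => h^-1 *: ((f \o shift c) _ - f c))) //.
  apply: cvg_trans fc; apply: cvg_app.
  move=> A [e egt0 Ae]; exists e => // x xe xgt0; apply: Ae => //.
  exact/ltr0_neq0.
near=> h; apply: mulr_le0_ge0.
  by rewrite invr_le0; apply: ltW; near: h; exists 1 => /=.
rewrite subr_ge0 [_%:A]mulr1; apply: cmin; near: h.
exists (c - y); first by rewrite /= subr_gt0.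
move=> h; rewrite /= distrC subr0 => /ltr_normlP[hy _] h0.
by rewrite ltrNl opprB in hy; rewrite -ltrBlDr hy gtrDr.
Unshelve. all: by end_near. Qed.

Lemma first_zero_crossing {R : realType} {h : R -> R} {y x : R} :
  y <= x -> (forall t, y <= t <= x -> {for t, continuous h}) ->
  0 < h y -> h x <= 0 ->
  exists z, [/\ y < z <= x, h z = 0 & forall t, y <= t < z -> 0 < h t].
Proof.
move=> yx hcont hy hx.
pose Z := [set t | y <= t <= x /\ h t <= 0]%classic.
have Zx : Z x by split; rewrite ?yx ?lexx.
have hasZ : has_inf Z by split; [exists x | exists y => t [/andP[]]].
pose z := inf Z.
have z_lb : lbound Z z := ge_inf hasZ.2.
have yz : y <= z by apply: lb_le_inf => [|t [/andP[]]]; first by exists x.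
have zx : z <= x := z_lb _ Zx.
have zcont : {for z, continuous h} by apply: hcont; rewrite yz zx.
have left_pos t : y <= t < z -> 0 < h t.
  move=> /andP[yt tz]; rewrite ltNge; apply/negP => ht.
  have : z <= t by apply: z_lb; split; rewrite ?yt ?(le_trans (ltW tz)).
  by rewrite leNgt tz.
have hz_le0 : h z <= 0.
  rewrite leNgt; apply/negP => hz.
  have [e /= e0 He] := (nbhs_ballP _ _).1 (@cvgr_gt _ _ _ _ _ _ zcont _ hz).
  have [t Zt tz] := inf_adherent e0 hasZ.
  have [zt [_ ht]] := (z_lb _ Zt, Zt).
  suff : 0 < h t by rewrite ltNge ht.
  by apply: He; rewrite /ball /= ltr_norml; apply/andP; split; lra.
have yltz : y < z by rewrite lt_neqAle yz andbT; apply: contraTneq hy => ->; rewrite -leNgt.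
exists z; split => //; first by rewrite yltz zx.
apply/eqP; rewrite eq_le hz_le0 /= leNgt; apply/negP => hz.
have [e /= e0 He] := (nbhs_ballP _ _).1 (@cvgr_lt _ _ _ _ _ _ zcont _ hz).
pose t := Num.max y (z - e / 2).
have [yt et] : y <= t /\ z - e / 2 <= t by rewrite !le_max !lexx orbT.
have tz : t < z by rewrite gt_max yltz /=; lra.
suff : h t < 0 by rewrite ltNge ltW // left_pos // yt tz.
by apply: He; rewrite /ball /= ltr_norml; apply/andP; split; lra.
Qed.

Lemma right_lim_gt {R : realType} {h : R -> R} {al l : \bar R} {c x : R} :
  (al < x%:E)%E -> right_lim h al l -> (c%:E < l)%E ->
  exists y, [/\ (al < y%:E)%E, y < x & c < h y].
Proof.
move=> alx hl /open_ereal_gt' cl.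
case: al alx hl => [a| |] //= ax /(_ _ cl) hc.
- near (a^'+)%classic => t; exists t; split; rewrite -?lte_fin; near: t.
  + exact: nbhs_right_gt.
  + by apply: nbhs_right_lt; rewrite -lte_fin.
  + exact: hc.
- near (-oo : set_system R) => t; exists t; split; rewrite -?lte_fin ?ltNyr //; near: t.
  + exact: nbhs_ninfty_lt.
  + exact: hc.
Unshelve. all: by end_near. Qed.

Lemma gt0_of_derive1_gt0_at_zeros {R : realType} {h : R -> R} {y x : R} :
  y <= x -> (forall t, y <= t <= x -> derivable h t 1) ->
  (forall t, y <= t <= x -> h t = 0 -> 0 < derive1 h t) ->
  0 < h y -> 0 < h x.
Proof.
move=> yx hd hzero hy; rewrite ltNge; apply/negP => hx.
have hcont t : y <= t <= x -> {for t, continuous h}.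
  by move=> /hd /derivable1_diffP /differentiable_continuous.
have [z [/andP[yz zx] hz left_pos]] := first_zero_crossing yx hcont hy hx.
have zyx : y <= z <= x by rewrite ltW.
have : derive1 h z <= 0.
  apply: (derive1_le0_at_left_min yz (hd _ zyx)) => t /andP[yt tz].
  by rewrite hz ltW // left_pos // ltW.
by rewrite leNgt hzero.
Qed.

Theorem lemma1 (R : realType) (al be : \bar R) (a b d e h : R -> R) (l : \bar R) :
  (al < be)%E ->
  (forall x, in_open_ext al be x ->
     [/\ derivable a x 1, derivable b x 1, derivable d x 1 & derivable e x 1]) ->
  (forall x, in_open_ext al be x -> 0 < d x /\ 0 < e x) ->
  (forall x, in_open_ext al be x -> derivable h x 1) ->
  (forall x, in_open_ext al be x ->
     derive1 h x = d x - (b x - a x) * h x - e x * (h x) ^+ 2) ->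
  right_lim h al l -> (0 < l)%E ->
  forall x, in_open_ext al be x -> 0 < h x.
Proof.
move=> _ _ de_gt0 h_der riccati hl l_gt0 x /andP[alx xbe].
have [y [aly yx hy]] := right_lim_gt alx hl l_gt0.
have yx_in t : y <= t <= x -> in_open_ext al be t.
  move=> /andP[yt tx]; apply/andP; split.
  - by apply: (lt_le_trans aly); rewrite lee_fin.
  - by apply: (le_lt_trans _ xbe); rewrite lee_fin.
apply: (gt0_of_derive1_gt0_at_zeros (ltW yx)) hy => t /yx_in t_in.
  exact: h_der.
by rewrite riccati // => ->; rewrite mulr0 subr0 expr0n mulr0 subr0; case: (de_gt0 t t_in).
Qed.
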